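(* Let $T$ and $T_{ij}$ ($1\le i\le s$, $1\le j\le r_i$) be quasiperiodic trigonometric polynomials on $\mathbb R^n$, and let $V=\bigcup_{i=1}^s\bigcap_{j=1}^{r_i}V_{ij}$ where each $V_{ij}$ is either $\{x:T_{ij}(x)=0\}$ or $\{x:T_{ij}(x)>0\}$. Let $A_1,\dots,A_N\in\mathbb R^n$ be free generators of the subgroup $\mathcal A$ of $(\mathbb R^n,+)$ generated by all frequencies of $T$ and of the $T_{ij}$ (so $\mathcal A=(A_1)\oplus\dots\oplus(A_N)$), and let $\Phi(x)=(A_1x,\dots,A_Nx)$. If $\Phi:\mathbb R^n\to\mathbb R^N$ is not injective (i.e. the orbit $\{\Phi(x)\bmod\mathbb Z^N\}$ has dimension less than $n$), then $V$ has no isolated points, and for every bounded $\Omega\subset\mathbb R^n$ with nonzero volume the mean value $M_\Omega$ of $T$ over the isolated points of $V$ is equal to zero.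
   Context: A quasiperiodic trigonometric polynomial is a function $T(x)=\sum_{k=1}^p c_k\cos 2\pi\alpha_kx+d_k\sin2\pi\alpha_kx$ with $c_k,d_k\in\mathbb R$ and frequencies $\alpha_k\in\mathbb R^n$ ($\alpha_kx$ the standard scalar product). For $\lambda>0$, $S_\Omega(\lambda)$ is the sum of the values of $T$ at the isolated points of $V$ lying in $\lambda\Omega$, and $M_\Omega=\lim_{\lambda\to\infty}S_\Omega(\lambda)/\operatorname{Vol}(\lambda\Omega)$. *)

From HB Require Import structures.
From mathcomp Require Import all_boot all_order all_algebra.
From mathcomp Require Import all_classical all_reals all_analysis.
Set Implicit Arguments. Unset Strict Implicit. Unset Printing Implicit Defensive.
Import Order.TTheory GRing.Theory Num.Theory.
Import numFieldNormedType.Exports.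
Local Open Scope classical_set_scope.
Local Open Scope ring_scope.

Definition dotp {R : realType} {n : nat} (a x : 'rV[R]_n) : R :=
  \sum_(i < n) a 0 i * x 0 i.

(* A quasiperiodic trigonometric polynomial, given by its list of terms
   (c_k, d_k, alpha_k) : T(x) = sum_k c_k cos(2 pi alpha_k x) + d_k sin(2 pi alpha_k x). *)
Definition qtp (R : realType) (n : nat) := seq (R * R * 'rV[R]_n).

Definition qtp_eval {R : realType} {n : nat} (T : qtp R n) (x : 'rV[R]_n) : R :=
  \sum_(t <- T) (t.1.1 * cos (2 * pi * dotp t.2 x)
                 + t.1.2 * sin (2 * pi * dotp t.2 x)).

Definition qtp_freqs {R : realType} {n : nat} (T : qtp R n) : seq 'rV[R]_n :=
  map snd T.

Definition in_Zspan_seq {R : realType} {n : nat} (fs : seq 'rV[R]_n) (v : 'rV[R]_n) : Prop :=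
  exists z : nat -> int, v = \sum_(k < size fs) (fs`_k) *~ z k.

Definition in_Zspan_fam {R : realType} {n N : nat} (A : 'I_N -> 'rV[R]_n) (v : 'rV[R]_n) : Prop :=
  exists z : 'I_N -> int, v = \sum_(k < N) (A k) *~ z k.

Definition Zfree {R : realType} {n N : nat} (A : 'I_N -> 'rV[R]_n) : Prop :=
  forall z : 'I_N -> int, \sum_(k < N) (A k) *~ z k = 0 -> forall k, z k = 0.

Definition free_generators {R : realType} {n N : nat} (fs : seq 'rV[R]_n)
  (A : 'I_N -> 'rV[R]_n) : Prop :=
  Zfree A /\
  (forall v, in_Zspan_seq fs v <-> in_Zspan_fam A v).

Definition Phi {R : realType} {n N : nat} (A : 'I_N -> 'rV[R]_n) (x : 'rV[R]_n) : 'rV[R]_N :=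
  \row_(k < N) dotp (A k) x.

Definition semialg_set {R : realType} {n s : nat} (r : 'I_s -> nat)
  (Tij : forall i : 'I_s, 'I_(r i) -> qtp R n)
  (kind : forall i : 'I_s, 'I_(r i) -> bool) : set 'rV[R]_n :=
  [set x | exists i : 'I_s, forall j : 'I_(r i),
     if kind i j then qtp_eval (Tij i j) x = 0 else 0 < qtp_eval (Tij i j) x].

Definition isolated_pt {R : realType} {n : nat} (V : set 'rV[R]_n) (x : 'rV[R]_n) : Prop :=
  V x /\ exists e : R, 0 < e /\
    forall y, V y -> (forall i, `|y 0 i - x 0 i| < e) -> y = x.

Definition bounded_rV {R : realType} {n : nat} (O : set 'rV[R]_n) : Prop :=
  exists M : R, forall x, O x -> forall i, `|x 0 i| <= M.

(* Lebesgue (outer) measure on R^n: infimum of total volumes of countable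
   covers by closed boxes [a_k, b_k]. *)
Definition box {R : realType} {n : nat} (a b : 'I_n -> R) : set 'rV[R]_n :=
  [set x | forall i, a i <= x 0 i <= b i].

Definition volume {R : realType} {n : nat} (O : set 'rV[R]_n) : \bar R :=
  ereal_inf [set S : \bar R | exists (a b : nat -> 'I_n -> R),
     (forall k i, a k i <= b k i) /\
     O `<=` \bigcup_k box (a k) (b k) /\
     S = (\sum_(0 <= k <oo) (\prod_(i < n) (b k i - a k i))%:E)%E].

Definition dilate {R : realType} {n : nat} (l : R) (O : set 'rV[R]_n) : set 'rV[R]_n :=
  [set l *: x | x in O].

Definition S_Omega {R : realType} {n : nat} (T : qtp R n) (V : set 'rV[R]_n)
  (O : set 'rV[R]_n) (l : R) : R :=
  (\sum_(x \in [set x | isolated_pt V x] `&` dilate l O) qtp_eval T x)%R.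

(* A non-injective Phi has a nonzero kernel vector d, orthogonal to every
   free generator A_k, hence to every frequency of T and of the T_ij.  All
   these polynomials are then constant along the lines x + t d, so V is a
   union of such lines and has no isolated point; the sum S_Omega is empty
   and the mean value vanishes identically. *)
From HB Require Import structures.
From mathcomp Require Import all_boot all_order all_algebra.
From mathcomp Require Import all_classical all_reals all_analysis.
Import Order.TTheory GRing.Theory Num.Theory.
Import numFieldNormedType.Exports.
Local Open Scope classical_set_scope.
Local Open Scope ring_scope.

Section QuasiperiodicLines.
Context {R : realType} {n : nat}.
Implicit Types (a d x y : 'rV[R]_n) (t : R).

Lemma dotpDr a x y : dotp a (x + y) = dotp a x + dotp a y.
Proof. by rewrite /dotp -big_split; apply: eq_bigr => i _; rewrite mxE mulrDr. Qed.

Lemma dotpZr a t x : dotp a (t *: x) = t * dotp a x.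
Proof. by rewrite /dotp mulr_sumr; apply: eq_bigr => i _; rewrite mxE mulrCA. Qed.

Lemma dotpBr a x y : dotp a (x - y) = dotp a x - dotp a y.
Proof. by rewrite -scaleN1r dotpDr dotpZr mulN1r. Qed.

Lemma dotp_Zsuml (N : nat) (A : 'I_N -> 'rV[R]_n) (z : 'I_N -> int) d :
  dotp (\sum_(k < N) A k *~ z k) d = \sum_(k < N) dotp (A k) d *~ z k.
Proof.
rewrite /dotp; under eq_bigr do rewrite summxE mulr_suml.
rewrite exchange_big; apply: eq_bigr => k _.
by rewrite mulrz_suml; apply: eq_bigr => i _; rewrite -scaler_int mxE -mulrA mulrzl.
Qed.

Lemma in_Zspan_fam_orthogonal (N : nat) (A : 'I_N -> 'rV[R]_n) v d :
  (forall k, dotp (A k) d = 0) -> in_Zspan_fam A v -> dotp v d = 0.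
Proof.
move=> Ad0 [z ->]; rewrite dotp_Zsuml big1 // => k _.
by rewrite Ad0 mul0rz.
Qed.

Lemma in_Zspan_seq_mem (fs : seq 'rV[R]_n) a : a \in fs -> in_Zspan_seq fs a.
Proof.
move=> afs; exists (fun k => ((k == index a fs)%N : int)).
have a_idx : (index a fs < size fs)%N by rewrite index_mem.
rewrite (bigD1 (Ordinal a_idx)) //= eqxx mulr1z nth_index // big1 ?addr0 // => k.
by rewrite -val_eqE /= => /negbTE ->; rewrite mulr0z.
Qed.

Lemma Phi_not_injective (N : nat) (A : 'I_N -> 'rV[R]_n) :
  ~ injective (Phi A) -> exists2 d, d != 0 & forall k, dotp (A k) d = 0.
Proof.
move=> ninj; apply: contrapT => no_kernel; apply: ninj => x y Phi_xy.
apply/eqP; rewrite -subr_eq0; apply/contraT => xy_neq0.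
case: no_kernel; exists (x - y) => // k.
move/(congr1 (fun M : 'rV[R]_N => M 0 k)): Phi_xy; rewrite !mxE => Phi_k.
by rewrite dotpBr Phi_k subrr.
Qed.

Lemma qtp_eval_shift (T : qtp R n) x d t :
  (forall a, a \in qtp_freqs T -> dotp a d = 0) ->
  qtp_eval T (x + t *: d) = qtp_eval T x.
Proof.
move=> Td0; apply: eq_big_seq => u uT.
by rewrite dotpDr dotpZr Td0 ?mulr0 ?addr0 //; apply: map_f.
Qed.

Lemma semialg_set_shift {s : nat} {r : 'I_s -> nat}
    {Tij : forall i : 'I_s, 'I_(r i) -> qtp R n}
    (kind : forall i : 'I_s, 'I_(r i) -> bool) {d} :
  (forall i j a, a \in qtp_freqs (Tij i j) -> dotp a d = 0) ->
  forall x t, semialg_set Tij kind x -> semialg_set Tij kind (x + t *: d).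
Proof.
move=> Tij_d0 x t [i Vi]; exists i => j.
by rewrite qtp_eval_shift; [apply: Vi | apply: Tij_d0].
Qed.

Lemma small_multiple d {e : R} : 0 < e -> exists2 t, 0 < t & forall i, `|t * d 0 i| < e.
Proof.
move=> e_gt0; set c := 1 + \sum_i `|d 0 i|.
have c_gt0 : 0 < c by rewrite ltr_pwDl ?sumr_ge0.
exists (e / c) => [|i]; first by rewrite divr_gt0.
rewrite normrM gtr0_norm ?divr_gt0 // mulrAC ltr_pdivrMr // ltr_pM2l //.
by rewrite /c (bigD1 i) //= addrCA ltr_pwDr // ltr_pwDl ?sumr_ge0.
Qed.

Lemma no_isolated_pt_of_lines {V : set 'rV[R]_n} {d} :
  d != 0 -> (forall x t, V x -> V (x + t *: d)) -> forall x, ~ isolated_pt V x.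
Proof.
move=> d_neq0 V_lines x [Vx [e [e_gt0 x_iso]]].
have [t t_gt0 td_small] := small_multiple d e_gt0.
have : x + t *: d = x.
  by apply: x_iso (V_lines x t Vx) _ => i; rewrite !mxE addrAC subrr add0r.
move/eqP; rewrite -subr_eq0 addrC addKr scaler_eq0 (negbTE d_neq0) orbF.
by rewrite gt_eqF.
Qed.

Lemma S_Omega_no_isolated (T : qtp R n) (V O : set 'rV[R]_n) l :
  (forall x, ~ isolated_pt V x) -> S_Omega T V O l = 0.
Proof.
move=> no_iso; rewrite /S_Omega.
suff -> : [set x | isolated_pt V x] `&` dilate l O = set0 by rewrite fsbig_set0.
by apply/seteqP; split => x // [/no_iso].
Qed.

End QuasiperiodicLines.

Theorem lemma2 (R : realType) (n s : nat) (r : 'I_s -> nat)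
  (T : qtp R n) (Tij : forall i : 'I_s, 'I_(r i) -> qtp R n)
  (kind : forall i : 'I_s, 'I_(r i) -> bool)
  (N : nat) (A : 'I_N -> 'rV[R]_n) :
  free_generators
    (qtp_freqs T ++ flatten [seq flatten [seq qtp_freqs (Tij i j) | j <- enum 'I_(r i)]
                              | i <- enum 'I_s]) A ->
  ~ injective (Phi A) ->
  (forall x, ~ isolated_pt (semialg_set Tij kind) x) /\
  (forall O : set 'rV[R]_n, bounded_rV O -> volume O != 0%E ->
     (S_Omega T (semialg_set Tij kind) O l / fine (volume (dilate l O)))
       @[l --> +oo] --> (0 : R)).
Proof.
move=> [_ span_fs] /Phi_not_injective [d d_neq0 Ad0].
have Tij_d0 i j a : a \in qtp_freqs (Tij i j) -> dotp a d = 0.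
  move=> a_ij; apply: in_Zspan_fam_orthogonal Ad0 _; apply/span_fs/in_Zspan_seq_mem.
  rewrite mem_cat; apply/orP; right.
  by apply/flatten_mapP; exists i; rewrite ?mem_enum //; apply/flatten_mapP; exists j;
    rewrite ?mem_enum.
have no_iso := no_isolated_pt_of_lines d_neq0 (semialg_set_shift kind Tij_d0).
split=> // O _ _.
under eq_fun do rewrite S_Omega_no_isolated // mul0r.
exact: cvg_cst.
Qed.
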